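(* Let $\Gamma$ be a layered graph, $n\ge2$, and let $a=\sum_{v\in V_n}\alpha_v v$ be a nonzero element of $B_n$. Then $\kappa_a=\bigcap_{v\in V_n:\,\alpha_v\neq0}\kappa_v$.
   Context: A layered graph is a finite directed graph $\Gamma=(V,E)$ with $V=\bigsqcup_{i=0}^{N}V_i$ such that every edge from $V_i$ goes to $V_{i-1}$; $|v|=i$ for $v\in V_i$, $V_+=\bigsqcup_{i\ge1}V_i$, $V_{\ge k}=\bigsqcup_{i\ge k}V_i$, $S(v)=\{w:(v,w)\in E\}$, nonempty for $v\in V_+$. Over a field $\mathbb F$, $B(\Gamma)=T(V_+)/R_B$, where $T(V_+)$ is the free algebra and $R_B$ is the two-sided ideal generated by $\{vw: v,w\in V_+,(v,w)\notin E\}\cup\{v\sum_{w\in S(v)}w: v\in V_{\ge2}\}$. It is doubly graded, $B(\Gamma)_{m,n}$ being spanned by images of $v_1\cdots v_m$ with $\sum|v_i|=n$. $B_n=B(\Gamma)_{1,n}$ is the span of $V_n$, in which $V_n$ is a basis. For $a\in B_n$ ($n\ge2$), $\kappa_a$ is the kernel of the linear map $B_{n-1}\to B(\Gamma)$, $b\mapsto ab$. *)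

From HB Require Import structures.
From mathcomp Require Import all_boot all_order all_algebra.
Set Implicit Arguments. Unset Strict Implicit. Unset Printing Implicit Defensive.
Import GRing.Theory.
Local Open Scope ring_scope.

Definition layered_graph (V : finType) (lvl : V -> nat) (E : rel V) : Prop :=
  (forall v w, E v w -> lvl v = (lvl w).+1) /\
  (forall v, (0 < lvl v)%N -> exists w, E v w).

(* Elements of the free algebra T(V_+) are represented as formal finite
   linear combinations of words: lists of (coefficient, word) pairs. *)
Definition fa (V : finType) (F : fieldType) := seq (F * seq V).

(* The coefficient of the word w in p. Two formal combinations denote the
   same element of T(V_+) iff all their coefficients agree. *)
Definition fcoef (V : finType) (F : fieldType) (p : fa V F) (w : seq V) : F :=
  \sum_(t <- p | t.2 == w) t.1.

(* Generators of R_B, indexed by (v, Some w) : the monomial v w, required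
   (v,w) not an edge, v,w in V_+ ; and (v, None) : v * sum_{w in S(v)} w,
   required v in V_{>=2}. *)
Definition gen_valid (V : finType) (lvl : V -> nat) (E : rel V)
    (g : V * option V) : bool :=
  match g with
  | (v, Some w) => [&& (0 < lvl v)%N, (0 < lvl w)%N & ~~ E v w]
  | (v, None) => (2 <= lvl v)%N
  end.

Definition gen_elt (V : finType) (F : fieldType) (E : rel V)
    (g : V * option V) : fa V F :=
  match g with
  | (v, Some w) => [:: (1, [:: v; w])]
  | (v, None) => [seq (1, [:: v; w]) | w <- enum (E v)]
  end.

Definition ideal_term (V : finType) (F : fieldType) (E : rel V)
    (t : F * seq V * (V * option V) * seq V) : fa V F :=
  let: (c, x, g, y) := t in
  [seq (c * u.1, x ++ u.2 ++ y) | u <- gen_elt F E g].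

(* Membership in the two-sided ideal R_B of T(V_+): p is a finite linear
   combination of elements x g y with x, y words in V_+ and g a generator. *)
Definition in_RB (V : finType) (F : fieldType) (lvl : V -> nat) (E : rel V)
    (p : fa V F) : Prop :=
  exists l : seq (F * seq V * (V * option V) * seq V),
    (forall t, t \in l ->
       [&& gen_valid lvl E t.1.2, all (fun u => (0 < lvl u)%N) t.1.1.2
         & all (fun u => (0 < lvl u)%N) t.2]) /\
    (forall w, fcoef p w = fcoef (flatten [seq ideal_term E t | t <- l]) w).

(* An element of B_n = span(V_n), given by its coefficients in the basis V_n. *)
Definition in_Bn (V : finType) (F : fieldType) (lvl : V -> nat) (n : nat)
    (a : V -> F) : Prop :=
  forall v, a v != 0 -> lvl v = n.

Definition mul_vec (V : finType) (F : fieldType) (a b : V -> F) : fa V F :=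
  [seq (a v * b w, [:: v; w]) | v <- enum V, w <- enum V].

(* b in kappa_a : a b = 0 in B(Gamma), i.e. a b in R_B. (b is assumed in B_{n-1}.) *)
Definition in_kappa (V : finType) (F : fieldType) (lvl : V -> nat) (E : rel V)
    (a b : V -> F) : Prop :=
  in_RB lvl E (mul_vec a b).

Definition vtx (V : finType) (F : fieldType) (v : V) : V -> F :=
  fun u => (u == v)%:R.

(* Write a = sum_v a_v v in B_n and b = sum_u b_u u in B_(n-1).  The
   coefficient of an edge word  v u  ((v,u) in E) in any element of R_B
   only receives contributions from the generator  v * sum_(w in S(v)) w
   (monomial generators are non-edges, and longer words never shorten),
   so it is the same for all u in S(v).  As the coefficient of  v u  in
   a b is a_v b_u, the relation  a b in R_B  forces b to be constant on
   S(v) whenever a_v <> 0.  Conversely, if b equals c_v on S(v) for every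
   such v, then  a b = sum_v a_v c_v (v sum_(S(v)) w) + sum a_v b_u v u,
   the last sum over non-edges, exhibits a b as an element of R_B.
   Hence b lies in kappa_a iff b is constant on S(v) for all v in the
   support of a; applied to a and to each basis vector v this gives
   kappa_a = the intersection of the kappa_v. *)
From HB Require Import structures.
From mathcomp Require Import all_boot all_order all_algebra.
From mathcomp Require Import zify.
Import GRing.Theory.
Local Open Scope ring_scope.

Section KernelOfMultiplication.
Local Set Implicit Arguments.
Local Unset Strict Implicit.

Variables (F : fieldType) (V : finType) (lvl : V -> nat) (E : rel V).

(* Coefficients, written with indicator scalars so that they can be summed. *)
Lemma fcoefE (p : fa V F) (w : seq V) :
  fcoef p w = \sum_(t <- p) (t.2 == w)%:R * t.1.
Proof.
rewrite /fcoef big_mkcond; apply: eq_bigr => t _.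
by case: eqP; rewrite ?mul1r ?mul0r.
Qed.

Lemma fcoef_flatten (T : Type) (f : T -> fa V F) (s : seq T) (w : seq V) :
  fcoef (flatten [seq f i | i <- s]) w = \sum_(i <- s) fcoef (f i) w.
Proof. by rewrite /fcoef big_flatten big_map. Qed.

Lemma fcoef_cat (p q : fa V F) (w : seq V) :
  fcoef (p ++ q) w = fcoef p w + fcoef q w.
Proof. by rewrite /fcoef big_cat. Qed.

Lemma fcoef_mul_vec (a b : V -> F) (w : seq V) :
  fcoef (mul_vec a b) w =
  \sum_(x : V) \sum_(y : V) ([:: x; y] == w)%:R * (a x * b y).
Proof.
rewrite fcoefE /mul_vec big_allpairs_dep /= -big_enum /=.
by apply: eq_bigr => x _; rewrite -big_enum.
Qed.

Lemma fcoef_mul_vec_word2 (a b : V -> F) (x y : V) :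
  fcoef (mul_vec a b) [:: x; y] = a x * b y.
Proof.
rewrite fcoef_mul_vec (bigD1 x) //= [X in _ + X]big1 ?addr0; last first.
  move=> x' /negbTE nx; apply: big1 => y' _.
  by rewrite !eqseq_cons nx mul0r.
rewrite (bigD1 y) //= [X in _ + X]big1 ?addr0 ?eqxx ?mul1r //.
by move=> y' /negbTE ny; rewrite !eqseq_cons ny andbF mul0r.
Qed.

Lemma cat_word2_eq (x y : seq V) (v w v0 u : V) :
  (x ++ [:: v, w & y] == [:: v0; u]) =
  [&& x == [::], y == [::], v == v0 & w == u].
Proof.
case: x => [|c x]; case: y => [|d y] /=.
- by rewrite !eqseq_cons andbT.
- by rewrite !eqseq_cons; case: (v == v0); case: (w == u).
- by apply/negbTE/negP => /eqP/(congr1 size); rewrite /= size_cat /=; lia.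
- by apply/negbTE/negP => /eqP/(congr1 size); rewrite /= size_cat /=; lia.
Qed.

Lemma fcoef_ideal_term_edge (t : F * seq V * (V * option V) * seq V) (v0 u : V) :
  gen_valid lvl E t.1.2 -> E v0 u ->
  fcoef (ideal_term E t) [:: v0; u] =
  [&& t.1.1.2 == [::], t.2 == [::] & t.1.2 == (v0, None)]%:R * t.1.1.1.
Proof.
case: t => [[[c x] [v [w|]]] y] /= gen_ok Ev0u.
  rewrite fcoefE big_seq1 /= cat_word2_eq.
  have /negbTE -> : ~~ [&& x == [::], y == [::], v == v0 & w == u].
    apply/and4P => -[_ _ /eqP vv0 /eqP wu]; case/and3P: gen_ok => _ _.
    by rewrite vv0 wu Ev0u.
  have /negbTE -> : (v, Some w) != (v0, None) by rewrite xpair_eqE andbF.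
  by rewrite !andbF !mul0r.
rewrite fcoefE /gen_elt !big_map /= big_enum /=.
under eq_bigr => w' _ do rewrite cat_word2_eq.
rewrite xpair_eqE andbT.
have [/and3P[/eqP -> /eqP -> /eqP ->] | nxy] :=
  boolP [&& x == [::], y == [::] & v == v0].
  rewrite (bigD1 u) //= !eqxx big1 ?addr0 ?mul1r ?mulr1 //.
  by move=> w' /andP[_ /negbTE ->]; rewrite andbF mul0r.
rewrite mul0r big1 // => w' _.
have /negbTE -> : ~~ [&& x == [::], y == [::], v == v0 & w' == u].
  by apply: contra nxy => /and4P[-> -> -> _].
by rewrite mul0r.
Qed.

Definition succ_const (b : V -> F) (v : V) : Prop :=
  forall u u', E v u -> E v u' -> b u = b u'.

Lemma kappa_succ_const (a b : V -> F) (v : V) :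
  in_kappa lvl E a b -> a v != 0 -> succ_const b v.
Proof.
move=> [l [l_ok ab_eq]] av u u' Evu Evu'.
have coef_edge w : E v w -> a v * b w =
  \sum_(t <- l) [&& t.1.1.2 == [::], t.2 == [::] & t.1.2 == (v, None)]%:R
                * t.1.1.1.
  move=> Evw; rewrite -fcoef_mul_vec_word2 ab_eq fcoef_flatten.
  rewrite big_seq [RHS]big_seq; apply: eq_bigr => t tl.
  by apply: fcoef_ideal_term_edge => //; case/and3P: (l_ok t tl).
by apply: (mulfI av); rewrite !coef_edge.
Qed.

Lemma fcoef_succ_gen (c : F) (v : V) (w : seq V) :
  fcoef (ideal_term E (c, [::], (v, None), [::])) w =
  \sum_(y : V) (E v y && ([:: v; y] == w))%:R * c.
Proof.
rewrite fcoefE /gen_elt !big_map /= big_enum /= big_mkcond /=.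
apply: eq_bigr => y _; rewrite unfold_in.
by case: (E v y); rewrite /= ?mulr1 ?mul0r.
Qed.

Lemma fcoef_monomial_gen (c : F) (v y : V) (w : seq V) :
  fcoef (ideal_term E (c, [::], (v, Some y), [::])) w = ([:: v; y] == w)%:R * c.
Proof. by rewrite fcoefE big_seq1 /= mulr1. Qed.

(* Sufficiency: if a is supported in V_(>=2), b in V_+, and b takes the
   value c v on S(v) for each v in the support of a, then
     a b = sum_v a_v c_v (v sum_(S(v)) w) + sum_((v,u) not in E) a_v b_u v u
   lies in R_B. *)
Lemma kappa_of_succ_values (a b c : V -> F) :
  (forall v, a v != 0 -> (2 <= lvl v)%N) ->
  (forall u, b u != 0 -> (0 < lvl u)%N) ->
  (forall v u, a v != 0 -> E v u -> b u = c v) ->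
  in_kappa lvl E a b.
Proof.
move=> a_lvl b_lvl b_succ.
pose non_edge (p : V * V) := [&& a p.1 != 0, b p.2 != 0 & ~~ E p.1 p.2].
pose succ_terms := [seq (a v * c v, [::] : seq V, (v, @None V), [::] : seq V)
                   | v <- [seq v <- enum V | a v != 0]].
pose mono_terms := [seq (a p.1 * b p.2, [::] : seq V, (p.1, Some p.2), [::] : seq V)
   | p <- [seq p <- [seq (x, y) | x <- enum V, y <- enum V] | non_edge p]].
exists (succ_terms ++ mono_terms); split.
  move=> t; rewrite mem_cat => /orP[] /mapP[p].
    by rewrite mem_filter => /andP[ap _] ->; rewrite /= a_lvl.
  rewrite mem_filter => /andP[/and3P[ap bp nE] _] ->.
  by rewrite /= nE (leq_trans _ (a_lvl _ ap)) // b_lvl.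
(* Compare coefficients word by word x y: for an edge the succ_term of x
   gives a_x c_x = a_x b_y; for a non-edge the monomial term gives a_x b_y. *)
move=> w; rewrite fcoef_mul_vec map_cat flatten_cat fcoef_cat !fcoef_flatten.
rewrite !big_map !big_filter.
under eq_bigr do rewrite fcoef_succ_gen.
under [X in _ + X]eq_bigr do rewrite fcoef_monomial_gen.
rewrite big_enum_cond [X in X + _]big_mkcond [X in _ + X]big_mkcond big_allpairs.
rewrite [X in _ + X]big_enum -big_split /=; apply: eq_bigr => x _.
rewrite big_enum.
have [ax | /negbNE/eqP ax0] := boolP (a x != 0); last first.
  by rewrite add0r !big1 // => y _; rewrite /non_edge /= ax0 ?eqxx mul0r ?mulr0.
rewrite -big_split /=; apply: eq_bigr => y _; rewrite /non_edge /= ax /=.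
have [Exy | nExy] := boolP (E x y).
  by rewrite (b_succ x y ax Exy) /= andbF addr0.
rewrite mul0r add0r andbT.
by case: (b y =P 0) => [-> | _]; rewrite ?mulr0.
Qed.

Lemma kappa_iff_succ_const (a b : V -> F) :
  (forall v, a v != 0 -> (2 <= lvl v)%N) ->
  (forall u, b u != 0 -> (0 < lvl u)%N) ->
  in_kappa lvl E a b <-> (forall v, a v != 0 -> succ_const b v).
Proof.
move=> a_lvl b_lvl; split=> [ab v av | b_const]; first exact: (kappa_succ_const ab av).
pose c v := if [pick u | E v u] is Some u then b u else 0.
apply: (@kappa_of_succ_values a b c) => // v u av Evu.
rewrite /c; case: pickP => [u' Evu' | no_succ]; first exact: b_const Evu Evu'.
by rewrite no_succ in Evu.
Qed.

Lemma vtx_support (v u : V) : vtx F v u != 0 -> u = v.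
Proof. by apply: contraNeq => /negbTE uv; rewrite /vtx uv. Qed.

Lemma vtx_self (v : V) : vtx F v v != 0.
Proof. by rewrite /vtx eqxx oner_neq0. Qed.

End KernelOfMultiplication.

Theorem mainTheorem8 (F : fieldType) (V : finType) (lvl : V -> nat) (E : rel V)
  (HG : layered_graph lvl E) (n : nat) (Hn : (2 <= n)%N)
  (a : V -> F) (Ha : in_Bn lvl n a) (Ha0 : exists v, a v != 0)
  (b : V -> F) (Hb : in_Bn lvl n.-1 b) :
  in_kappa lvl E a b <->
  (forall v, a v != 0 -> in_kappa lvl E (vtx F v) b).
Proof.
have a_lvl v : a v != 0 -> (2 <= lvl v)%N by move/Ha ->.
have b_lvl u : b u != 0 -> (0 < lvl u)%N.
  by move/Hb ->; rewrite -ltnS prednK // (leq_trans _ Hn).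
have vtx_lvl v : a v != 0 -> forall u, vtx F v u != 0 -> (2 <= lvl u)%N.
  by move=> av u /vtx_support ->; apply: a_lvl.
have kappa_vtx v : a v != 0 ->
    in_kappa lvl E (vtx F v) b <-> succ_const E b v.
  move=> av; apply: (iff_trans (kappa_iff_succ_const E (vtx_lvl v av) b_lvl)).
  split=> [|b_v _ /vtx_support -> //]; apply; exact: vtx_self.
apply: (iff_trans (kappa_iff_succ_const E a_lvl b_lvl)).
by split=> b_const v av; apply/(kappa_vtx v av)/b_const.
Qed.
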